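(* Let $(M,d)$ be a pointed metric space with $d(x,y)\in\mathbb N\cup\{0\}$ for all $x,y\in M$, and let $A\subseteq\widetilde M$ be cyclically monotonic. Then there exists $f\in B_{\mathrm{Lip}_0(M)}$ such that $f(x)\in\mathbb Z$ for all $x\in M$ and $f(m_{x,y})=1$ for all $(x,y)\in A$.
   Context: $M$ has base point $0$; $\mathrm{Lip}_0(M)$ is the real Banach space of Lipschitz $f\colon M\to\mathbb R$ with $f(0)=0$, normed by the best Lipschitz constant, with unit ball $B_{\mathrm{Lip}_0(M)}$. $\widetilde M=\{(x,y)\in M\times M:x\ne y\}$ and $f(m_{x,y})=(f(x)-f(y))/d(x,y)$. $A\subseteq\widetilde M$ is cyclically monotonic if for every finite sequence $(x_1,y_1),\dots,(x_n,y_n)\in A$, with $y_{n+1}=y_1$, $\sum_i d(x_i,y_{i+1})\ge\sum_i d(x_i,y_i)$. *)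

From Stdlib Require Import Reals Lra Lia List.
Open Scope R_scope.

Definition is_metric {M : Type} (d : M -> M -> R) : Prop :=
  (forall x y, 0 <= d x y) /\
  (forall x y, d x y = 0 <-> x = y) /\
  (forall x y, d x y = d y x) /\
  (forall x y z, d x z <= d x y + d y z).

Definition Mtilde {M : Type} (p : M * M) : Prop := fst p <> snd p.

(* f(m_{x,y}) = (f x - f y) / d(x,y) *)
Definition mol_eval {M : Type} (d : M -> M -> R) (f : M -> R) (x y : M) : R :=
  (f x - f y) / d x y.

Definition lip0 {M : Type} (d : M -> M -> R) (base : M) (f : M -> R) : Prop :=
  f base = 0 /\ exists L, forall x y, Rabs (f x - f y) <= L * d x y.

(* Unit ball of Lip_0(M): best Lipschitz constant <= 1, i.e. 1 is a Lipschitz constant. *)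
Definition in_unit_ball_lip0 {M : Type} (d : M -> M -> R) (base : M) (f : M -> R) : Prop :=
  lip0 d base f /\ forall x y, Rabs (f x - f y) <= d x y.

(* Sequences are 0-indexed lists; the successor of index i is (i+1) mod n. *)
Definition cyclically_monotonic {M : Type} (d : M -> M -> R)
    (A : M * M -> Prop) : Prop :=
  forall (l : list (M * M)) (p0 : M * M),
    (forall p, In p l -> A p) ->
    let n := length l in
    fold_right Rplus 0
      (map (fun i => d (fst (nth i l p0)) (snd (nth ((i + 1) mod n)%nat l p0)))
           (seq 0 n))
    >=
    fold_right Rplus 0
      (map (fun i => d (fst (nth i l p0)) (snd (nth i l p0))) (seq 0 n)).

(* Rockafellar's construction for cyclically monotone sets, with integer distances.
   Fix [(x0, y0)] in [A] and let [g z] be the supremum, over chains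
   [(x0, y0), ..., (xn, yn)] in [A], of
   [sum_i (d(xi, yi) - d(xi, y(i+1)))] with [y(n+1) = z].  Each such sum is
   1-Lipschitz in [z], and cyclic monotonicity bounds it by [d(y0, z)]; since
   the sums are integers, the supremum is attained.  Appending a pair
   [(x, y)] of [A] to a chain realizing [g y] shows [g x >= g y + d(x, y)], and
   the 1-Lipschitz bound gives equality; [g - g base] is the required function. *)
From Stdlib Require Import Reals Lra Lia List Classical IndefiniteDescription.
Open Scope R_scope.

Definition is_integer (r : R) : Prop := exists k : Z, r = IZR k.

Lemma sum_map_minus {T : Type} (f g : T -> R) (l : list T) :
  fold_right Rplus 0 (map (fun i => f i - g i) l) =
  fold_right Rplus 0 (map f l) - fold_right Rplus 0 (map g l).
Proof. induction l as [|a l IH]; simpl; [lra | rewrite IH; lra]. Qed.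

Lemma integer_le_of_lt_succ (r s : R) :
  is_integer r -> is_integer s -> s < r + 1 -> s <= r.
Proof.
  intros [kr ->] [ks ->] Hlt.
  rewrite <- plus_IZR in Hlt. apply lt_IZR in Hlt. apply IZR_le. lia.
Qed.

(* The least upper bound [m] is attained because some element exceeds [m - 1]
   and no integer lies strictly between it and [m]. *)
Lemma bounded_integer_set_has_max (E : R -> Prop) (b : R) :
  (exists r, E r) -> (forall r, E r -> is_integer r) -> (forall r, E r -> r <= b) ->
  exists r, E r /\ forall s, E s -> s <= r.
Proof.
  intros Hne Hint Hb.
  destruct (completeness E) as [m [Hub Hleast]]; [now exists b | exact Hne |].
  assert (Hnear : exists r, E r /\ m - 1 < r).
  { apply NNPP; intros Hnone.
    enough (m <= m - 1) by lra.
    apply Hleast; intros r Er.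
    apply Rnot_lt_le; intros Hlt. apply Hnone. now exists r. }
  destruct Hnear as [r [Er Hr]].
  exists r; split; [exact Er |].
  intros s Es. apply integer_le_of_lt_succ; auto.
  specialize (Hub s Es). lra.
Qed.

Section Chains.

Variables (M : Type) (d : M -> M -> R).

Fixpoint chain_sum (l : list (M * M)) (z : M) : R :=
  match l with
  | nil => 0
  | p :: l' => d (fst p) (snd p) - d (fst p) (snd (hd (z, z) l')) + chain_sum l' z
  end.

Lemma chain_sum_rcons (l : list (M * M)) (x y z : M) :
  chain_sum (l ++ (x, y) :: nil) z = chain_sum l y + d x y - d x z.
Proof.
  induction l as [|p l IH]; simpl; [lra |].
  rewrite IH. destruct l; simpl; lra.
Qed.

Lemma chain_sum_nth (l : list (M * M)) (z : M) (p : M * M) :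
  chain_sum l z =
  fold_right Rplus 0
    (map (fun i => d (fst (nth i l p)) (snd (nth i l p))
                   - d (fst (nth i l p)) (snd (nth (S i) l (z, z))))
         (seq 0 (length l))).
Proof.
  induction l as [|q l IH]; [reflexivity |].
  simpl length. rewrite <- cons_seq, <- seq_shift. cbn [map]. rewrite map_map. simpl.
  rewrite IH. destruct l; reflexivity.
Qed.

Lemma chain_sum_integer (l : list (M * M)) (z : M) :
  (forall x y, is_integer (d x y)) -> is_integer (chain_sum l z).
Proof.
  intros Hint. induction l as [|p l [k Hk]]; [now exists 0%Z |].
  destruct (Hint (fst p) (snd p)) as [a Ha].
  destruct (Hint (fst p) (snd (hd (z, z) l))) as [b Hb].
  exists (a - b + k)%Z. simpl. rewrite Ha, Hb, Hk, plus_IZR, minus_IZR. reflexivity.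
Qed.

Hypothesis Hd : is_metric d.

Lemma chain_sum_lipschitz (l : list (M * M)) (z w : M) :
  chain_sum l z <= chain_sum l w + d z w.
Proof.
  destruct Hd as (Hnn & _ & _ & Htri).
  destruct l as [|[x y] l] using rev_ind.
  - simpl. specialize (Hnn z w). lra.
  - rewrite !chain_sum_rcons. specialize (Htri x z w). lra.
Qed.

(* With [z := y0] the subtracted terms are those of the cycle in
   [cyclically_monotonic], whose last link returns to [y0]. *)
Lemma chain_sum_cycle_nonpos (A : M * M -> Prop) (p : M * M) (rest : list (M * M)) :
  cyclically_monotonic d A -> (forall q, In q (p :: rest) -> A q) ->
  chain_sum (p :: rest) (snd p) <= 0.
Proof.
  intros Hcm Hall. specialize (Hcm (p :: rest) p Hall). cbv zeta in Hcm.
  set (l := p :: rest) in *.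
  rewrite (chain_sum_nth l (snd p) p), sum_map_minus.
  enough (Hcyc :
    map (fun i => d (fst (nth i l p)) (snd (nth (S i) l (snd p, snd p)))) (seq 0 (length l)) =
    map (fun i => d (fst (nth i l p)) (snd (nth ((i + 1) mod length l) l p)))
        (seq 0 (length l))) by (rewrite Hcyc; lra).
  apply map_ext_in. intros i Hi%in_seq. rewrite Nat.add_1_r.
  destruct (Nat.eq_dec (S i) (length l)) as [Hlast | Hinner].
  - rewrite Hlast, Nat.Div0.mod_same, (@nth_overflow _ l (length l)) by lia. reflexivity.
  - rewrite Nat.mod_small, (nth_indep l (snd p, snd p) p) by lia. reflexivity.
Qed.

Definition chain_values (A : M * M -> Prop) (p0 : M * M) (z : M) (r : R) : Prop :=
  exists rest, Forall A rest /\ r = chain_sum (p0 :: rest) z.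

Lemma chain_values_have_max (A : M * M -> Prop) (p0 : M * M) (z : M) :
  (forall x y, is_integer (d x y)) -> cyclically_monotonic d A -> A p0 ->
  exists r, chain_values A p0 z r /\ forall s, chain_values A p0 z s -> s <= r.
Proof.
  intros Hint Hcm Ap0.
  apply (bounded_integer_set_has_max _ (d z (snd p0))).
  - exists (chain_sum (p0 :: nil) z), nil. auto.
  - intros r [rest [_ ->]]. now apply chain_sum_integer.
  - intros r [rest [Hrest ->]].
    pose proof (chain_sum_lipschitz (p0 :: rest) z (snd p0)).
    enough (chain_sum (p0 :: rest) (snd p0) <= 0) by lra.
    apply (chain_sum_cycle_nonpos A); [exact Hcm |]. intros q [<- | Hq]; [exact Ap0 |].
    exact (proj1 (Forall_forall A rest) Hrest q Hq).
Qed.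

Lemma exists_integer_potential (A : M * M -> Prop) :
  (forall x y, is_integer (d x y)) -> cyclically_monotonic d A ->
  exists g : M -> R,
    (forall x, is_integer (g x)) /\
    (forall x y, g x <= g y + d x y) /\
    (forall x y, A (x, y) -> g y + d x y <= g x).
Proof.
  intros Hint Hcm.
  destruct (classic (exists p, A p)) as [[p0 Ap0] | Hempty].
  2:{ exists (fun _ => 0). destruct Hd as (Hnn & _).
      split; [now exists 0%Z | split].
      - intros x y. specialize (Hnn x y). lra.
      - intros x y Axy. exfalso. eauto. }
  destruct (functional_choice _
              (fun z => chain_values_have_max A p0 z Hint Hcm Ap0)) as [g Hg].
  exists g. split; [| split].
  - intros x. destruct (Hg x) as [[rest [_ ->]] _]. now apply chain_sum_integer.
  - intros x y. destruct (Hg x) as [[rest [Hrest ->]] _]. destruct (Hg y) as [_ Hmax].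
    pose proof (chain_sum_lipschitz (p0 :: rest) x y).
    enough (chain_sum (p0 :: rest) y <= g y) by lra.
    apply Hmax. now exists rest.
  - intros x y Axy. destruct (Hg y) as [[rest [Hrest ->]] _]. destruct (Hg x) as [_ Hmax].
    destruct Hd as (_ & Hzero & _).
    assert (Hxx : d x x = 0) by now apply Hzero.
    enough (chain_sum ((p0 :: rest) ++ (x, y) :: nil) x <= g x)
      by (rewrite chain_sum_rcons in *; lra).
    apply Hmax. exists (rest ++ (x, y) :: nil). split; [| reflexivity].
    apply Forall_app. auto.
Qed.

End Chains.

Theorem lemma5p1 (M : Type) (d : M -> M -> R) (base : M)
  (Hd : is_metric d)
  (Hnat : forall x y : M, exists n : nat, d x y = INR n)
  (A : M * M -> Prop)
  (HA : forall p, A p -> Mtilde p)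
  (Hcm : cyclically_monotonic d A) :
  exists f : M -> R,
    in_unit_ball_lip0 d base f /\
    (forall x : M, exists z : Z, f x = IZR z) /\
    (forall x y : M, A (x, y) -> mol_eval d f x y = 1).
Proof.
  assert (Hint : forall x y, is_integer (d x y)).
  { intros x y. destruct (Hnat x y) as [n ->]. exists (Z.of_nat n). apply INR_IZR_INZ. }
  destruct (exists_integer_potential M d Hd A Hint Hcm) as (g & gZ & glip & gA).
  pose proof Hd as (_ & Hzero & Hsym & _).
  assert (Hunit : forall x y, Rabs ((g x - g base) - (g y - g base)) <= d x y).
  { intros x y. apply Rabs_le. pose proof (glip x y). pose proof (glip y x).
    rewrite (Hsym y x) in *. lra. }
  exists (fun x => g x - g base). split; [| split].
  - split; [split |]; [lra | exists 1 | exact Hunit].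
    intros x y. rewrite Rmult_1_l. apply Hunit.
  - intros x. destruct (gZ x) as [a ->], (gZ base) as [b ->].
    exists (a - b)%Z. now rewrite minus_IZR.
  - intros x y Axy. unfold mol_eval.
    replace (g x - g base - (g y - g base)) with (d x y)
      by (pose proof (glip x y); pose proof (gA x y Axy); lra).
    apply Rinv_r. intros H0. apply (HA _ Axy), Hzero, H0.
Qed.
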